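(* Let $\lambda\in\mathbb{C}$ with $|\lambda|>1$, and let $g,h\in \mathrm{SL}(2,\mathbb{C})$ be $$g=\begin{pmatrix}\lambda&0\\0&\lambda^{-1}\end{pmatrix},\qquad h=\begin{pmatrix}a&b\\c&d\end{pmatrix}.$$ Put $M_g=|\lambda-1|+|\lambda^{-1}-1|$ and suppose $M_g<1$. If the subgroup $\langle g,h\rangle$ is discrete and non-elementary, then each of the following strict inequalities holds: $$|bc|^{1/2}>\frac{1-M_g}{M_g},\qquad |1+bc|^{1/2}>\frac{1-M_g}{M_g},\qquad |1+bc|+|bc|>\frac{2(1-M_g)}{M_g^2}.$$
   Context: A subgroup of $\mathrm{SL}(2,\mathbb{C})$ is discrete if it is discrete in the matrix topology. It is elementary if its action on $\mathbb{H}^3\cup\partial\mathbb{H}^3$ (via Möbius transformations) has a finite orbit; otherwise it is non-elementary. Since $|\lambda|>1$, $g$ is loxodromic. *)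

From Stdlib Require Import Reals List.
Open Scope R_scope.

Record Cx := mkCx { re : R; im : R }.

Definition Cadd (x y : Cx) : Cx := mkCx (re x + re y) (im x + im y).
Definition Cneg (x : Cx) : Cx := mkCx (- re x) (- im x).
Definition Csub (x y : Cx) : Cx := Cadd x (Cneg y).
Definition Cmul (x y : Cx) : Cx :=
  mkCx (re x * re y - im x * im y) (re x * im y + im x * re y).
Definition Cconj (x : Cx) : Cx := mkCx (re x) (- im x).
Definition Cnorm2 (x : Cx) : R := re x * re x + im x * im x.
Definition Cnorm (x : Cx) : R := sqrt (Cnorm2 x).
Definition Cinv (x : Cx) : Cx := mkCx (re x / Cnorm2 x) (- im x / Cnorm2 x).
Definition CofR (r : R) : Cx := mkCx r 0.
Definition Czero : Cx := CofR 0.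
Definition Cone : Cx := CofR 1.
Definition Cscale (r : R) (x : Cx) : Cx := mkCx (r * re x) (r * im x).

Record M2 := mkM2 { m11 : Cx; m12 : Cx; m21 : Cx; m22 : Cx }.

Definition mmul (A B : M2) : M2 :=
  mkM2 (Cadd (Cmul (m11 A) (m11 B)) (Cmul (m12 A) (m21 B)))
       (Cadd (Cmul (m11 A) (m12 B)) (Cmul (m12 A) (m22 B)))
       (Cadd (Cmul (m21 A) (m11 B)) (Cmul (m22 A) (m21 B)))
       (Cadd (Cmul (m21 A) (m12 B)) (Cmul (m22 A) (m22 B))).
Definition mdet (A : M2) : Cx := Csub (Cmul (m11 A) (m22 A)) (Cmul (m12 A) (m21 A)).
(* inverse of an SL(2,C) matrix (adjugate) *)
Definition minv (A : M2) : M2 :=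
  mkM2 (m22 A) (Cneg (m12 A)) (Cneg (m21 A)) (m11 A).
Definition mid : M2 := mkM2 Cone Czero Czero Cone.

(* distance inducing the matrix topology on M_2(C) *)
Definition mdist (A B : M2) : R :=
  Cnorm (Csub (m11 A) (m11 B)) + Cnorm (Csub (m12 A) (m12 B))
  + Cnorm (Csub (m21 A) (m21 B)) + Cnorm (Csub (m22 A) (m22 B)).

Inductive gen (g h : M2) : M2 -> Prop :=
| gen_id : gen g h mid
| gen_g : gen g h g
| gen_h : gen g h h
| gen_inv : forall x, gen g h x -> gen g h (minv x)
| gen_mul : forall x y, gen g h x -> gen g h y -> gen g h (mmul x y).

Definition discrete (S : M2 -> Prop) : Prop :=
  forall x, S x -> exists eps, 0 < eps /\
    forall y, S y -> mdist x y < eps -> y = x.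

(* upper half-space model: PFin z t with t > 0 is a point of H^3,
   PFin z 0 is the boundary point z in C, PInf is the boundary point ∞ *)
Inductive P3 := PInf : P3 | PFin : Cx -> R -> P3.

Definition validP (p : P3) : Prop :=
  match p with PInf => True | PFin _ t => 0 <= t end.

(* Poincaré extension of the Möbius transformation of A in SL(2,C) *)
Definition act (A : M2) (p : P3) : P3 :=
  let a := m11 A in let b := m12 A in let c := m21 A in let d := m22 A in
  match p with
  | PInf => if Req_dec_T (Cnorm2 c) 0 then PInf else PFin (Cmul a (Cinv c)) 0
  | PFin z t =>
      let w := Cadd (Cmul c z) d in
      let D := Cnorm2 w + Cnorm2 c * (t * t) in
      if Req_dec_T D 0 then PInf
      else PFin (Cscale (/ D) (Cadd (Cmul (Cadd (Cmul a z) b) (Cconj w))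
                                    (Cscale (t * t) (Cmul a (Cconj c)))))
                (t / D)
  end.

Definition elementary (S : M2 -> Prop) : Prop :=
  exists p, validP p /\ exists l : list P3, forall A, S A -> In (act A p) l.

From Stdlib Require Import Reals List Lra Psatz.
From Coquelicot Require Complex.
Open Scope R_scope.

(* With nu = lam - 1/lam (so |nu| <= M_g) the Jorgensen sequence h_0 = h,
   h_(n+1) = h_n g h_n^-1 satisfies b_(n+1) c_(n+1) = - b_n c_n (1 + b_n c_n) nu^2, its
   diagonal entries are lam + b_n c_n nu and 1/lam - b_n c_n nu, and its trace is
   lam + 1/lam.  If |nu|^2 (1 + |nu|^2 |bc| |1+bc|) < 1, the products b_n c_n tend to 0
   geometrically; conjugating h_n by a suitable power of g balances |b_n| against |c_n|,
   which yields elements of <g,h> converging to g.  Discreteness makes one of them equal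
   to g, so some h_n is diagonal, and going back along the sequence h is diagonal or
   antidiagonal; then <g,h> preserves {0, oo} and is elementary.  Each of the three
   claimed inequalities failing would give |nu|^2 (1 + |nu|^2 |bc| |1+bc|) < 1. *)

Lemma Cx_eq (x y : Cx) : re x = re y -> im x = im y -> x = y.
Proof. destruct x, y; simpl; intros; subst; reflexivity. Qed.

Definition Cx_ring : ring_theory Czero Cone Cadd Cmul Csub Cneg (@eq Cx).
Proof.
  constructor; intros; apply Cx_eq;
    unfold Cadd, Cmul, Csub, Cneg, Czero, Cone, CofR; simpl; ring.
Qed.
Add Ring CxRing : Cx_ring.

Definition toC (x : Cx) : Complex.C := (re x, im x).

Lemma Cnorm_Cmod x : Cnorm x = Complex.Cmod (toC x).
Proof. unfold Cnorm, Complex.Cmod, Cnorm2, toC; simpl. f_equal. ring. Qed.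

Lemma Cnorm_ge0 x : 0 <= Cnorm x.
Proof. rewrite Cnorm_Cmod. apply Complex.Cmod_ge_0. Qed.

Lemma Cnorm_mul x y : Cnorm (Cmul x y) = Cnorm x * Cnorm y.
Proof. rewrite !Cnorm_Cmod, <- Complex.Cmod_mult. reflexivity. Qed.

Lemma Cnorm_add x y : Cnorm (Cadd x y) <= Cnorm x + Cnorm y.
Proof. rewrite !Cnorm_Cmod. exact (Complex.Cmod_triangle (toC x) (toC y)). Qed.

Lemma Cnorm_neg x : Cnorm (Cneg x) = Cnorm x.
Proof. rewrite !Cnorm_Cmod. exact (Complex.Cmod_opp (toC x)). Qed.

Lemma Cnorm_sub x y : Cnorm (Csub x y) <= Cnorm x + Cnorm y.
Proof. unfold Csub. rewrite <- (Cnorm_neg y). apply Cnorm_add. Qed.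

Lemma Cnorm_sub0l x : Cnorm (Csub Czero x) = Cnorm x.
Proof. replace (Csub Czero x) with (Cneg x) by ring. apply Cnorm_neg. Qed.

Lemma Cnorm_one : Cnorm Cone = 1.
Proof. unfold Cnorm, Cnorm2; simpl. replace (1 * 1 + 0 * 0) with 1 by ring. apply sqrt_1. Qed.

Lemma Cnorm_zero : Cnorm Czero = 0.
Proof. unfold Cnorm, Cnorm2; simpl. replace (0 * 0 + 0 * 0) with 0 by ring. apply sqrt_0. Qed.

Lemma Cnorm_add1_le x : Cnorm (Cadd Cone x) <= 1 + Cnorm x.
Proof. rewrite <- Cnorm_one. apply Cnorm_add. Qed.

Lemma Cnorm_eq0 x : Cnorm x = 0 -> x = Czero.
Proof.
  rewrite Cnorm_Cmod. intro H. apply Complex.Cmod_eq_0 in H. unfold toC in H.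
  injection H; intros; apply Cx_eq; simpl; auto.
Qed.

Lemma Cnorm_pos x : x <> Czero -> 0 < Cnorm x.
Proof.
  intro H. destruct (Cnorm_ge0 x) as [|E]; auto.
  exfalso. apply H, Cnorm_eq0. auto.
Qed.

Lemma Cmul_inv x : x <> Czero -> Cmul x (Cinv x) = Cone.
Proof.
  intro H. assert (Hx : 0 < Cnorm2 x).
  { pose proof (Cnorm_pos x H) as Hp. unfold Cnorm in Hp.
    destruct (Rle_lt_dec (Cnorm2 x) 0) as [Hle|]; auto.
    rewrite sqrt_neg_0 in Hp; lra. }
  unfold Cnorm2 in Hx.
  apply Cx_eq; unfold Cmul, Cinv, Cone, CofR, Cnorm2; simpl; field; lra.
Qed.

Lemma Cnorm_inv x : x <> Czero -> Cnorm (Cinv x) = / Cnorm x.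
Proof.
  intro H. pose proof (Cnorm_pos x H).
  assert (E : Cnorm x * Cnorm (Cinv x) = 1).
  { rewrite <- Cnorm_mul, Cmul_inv, Cnorm_one; auto. }
  apply (Rmult_eq_reg_l (Cnorm x)); [rewrite E; field|]; lra.
Qed.

Lemma Cmul_eq0 x y : Cmul x y = Czero -> x = Czero \/ y = Czero.
Proof.
  intro H.
  assert (E : Cnorm x * Cnorm y = 0) by (rewrite <- Cnorm_mul, H; apply Cnorm_zero).
  apply Rmult_integral in E. destruct E; [left|right]; apply Cnorm_eq0; auto.
Qed.

Lemma Cnorm_gt1_neq0 x : 1 < Cnorm x -> x <> Czero.
Proof. intros H E. rewrite E, Cnorm_zero in H. lra. Qed.

Lemma Cone_neq0 : Cone <> Czero.
Proof. intro H. assert (E : re Cone = re Czero) by (rewrite H; auto). simpl in E. lra. Qed.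

Lemma pow_unbounded q T : 1 < q -> exists n, T < q ^ n.
Proof.
  intro Hq. destruct (Pow_x_infinity q) with (b := T + 1) as [N HN].
  - rewrite Rabs_right; lra.
  - exists N. specialize (HN N (le_n N)).
    rewrite Rabs_right in HN; [lra|]. apply Rle_ge, pow_le; lra.
Qed.

Lemma pow_bracket q t : 1 < q -> 1 <= t -> exists j, q ^ j <= t < q ^ S j.
Proof.
  intros Hq Ht. destruct (pow_unbounded q t Hq) as [n Hn].
  induction n as [|n IH].
  - simpl in Hn. lra.
  - destruct (Rlt_le_dec t (q ^ n)) as [Hlt|Hle]; auto.
    exists n. auto.
Qed.

Lemma pow_inv_vanishes q eta : 1 < q -> 0 < eta -> exists j, (/ q) ^ j < eta.
Proof.
  intros Hq He. destruct (pow_lt_1_zero (/ q)) with (y := eta) as [N HN]; auto.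
  - rewrite Rabs_right.
    + rewrite <- Rinv_1. apply Rinv_lt_contravar; lra.
    + apply Rle_ge, Rlt_le, Rinv_0_lt_compat; lra.
  - exists N. specialize (HN N (le_n N)).
    rewrite Rabs_right in HN; auto. apply Rle_ge, pow_le, Rlt_le, Rinv_0_lt_compat; lra.
Qed.

(* Taking [(L^2)^j <= B/C < (L^2)^(j+1)] makes [X := B L^-j] the larger of [X] and
   [Y := C L^j] while [X^2 < L^2 X Y = L^2 B C]. *)
Lemma balance_powers L B C eta : 1 < L -> 0 <= C <= B -> 0 < eta ->
  exists j, B * (/ L) ^ j + C * L ^ j < 2 * L * sqrt (B * C) + eta.
Proof.
  intros HL [HC HCB] He.
  assert (Hs0 : 0 <= 2 * L * sqrt (B * C)) by (apply Rmult_le_pos; [lra|apply sqrt_pos]).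
  destruct HC as [HC|HC]; cycle 1.
  { subst C. destruct (Req_dec B 0) as [HB|HB].
    - exists O. subst B. simpl. lra.
    - destruct (pow_inv_vanishes L (eta / B) HL) as [j Hj];
        [apply Rdiv_lt_0_compat; lra|].
      exists j. apply Rmult_lt_compat_l with (r := B) in Hj; [|lra].
      replace (B * (eta / B)) with eta in Hj by (field; lra). lra. }
  assert (Ht : 1 <= B / C).
  { apply Rmult_le_reg_r with C; [lra|]. unfold Rdiv.
    rewrite Rmult_assoc, Rinv_l; lra. }
  destruct (pow_bracket (L * L) (B / C)) as [j [Hlo Hhi]]; [nra|auto|].
  exists j.
  set (w := L ^ j).
  assert (Hw : 0 < w) by (apply pow_lt; lra).
  rewrite pow_inv. fold w.
  rewrite Rpow_mult_distr in Hlo. simpl in Hhi. rewrite Rpow_mult_distr in Hhi. fold w in Hlo, Hhi.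
  assert (HBC : B / C * C = B) by (field; lra).
  assert (Hlo' : w * w * C <= B) by nra.
  assert (Hhi' : B < L * w * (L * w) * C) by nra.
  set (s := sqrt (B * C)).
  assert (Hs' : s * s = B * C) by (apply sqrt_sqrt; nra).
  assert (Hs1 : 0 <= s) by apply sqrt_pos.
  set (X := B * / w).
  assert (HX : X * w = B) by (unfold X; field; lra).
  assert (HX0 : 0 <= X) by nra.
  assert (HYX : C * w <= X) by nra.
  assert (HXs : X < L * s).
  { assert (HXX : X * X * (w * w) = B * B) by (rewrite <- HX; ring).
    assert (Hss : L * s * (L * s) * (w * w) = B * (L * w * (L * w) * C)) by (transitivity (L * L * (s * s) * (w * w)); [ring|rewrite Hs'; ring]).
    assert (X * X * (w * w) < L * s * (L * s) * (w * w)).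
    { rewrite HXX, Hss. apply Rmult_lt_compat_l; lra. }
    assert (Hsq : X * X < L * s * (L * s)) by (apply Rmult_lt_reg_r with (w * w); nra).
    destruct (Rlt_le_dec X (L * s)) as [|Hge]; auto.
    assert (L * s * (L * s) <= X * X) by (apply Rmult_le_compat; nra).
    lra. }
  lra.
Qed.

Lemma quadratic_recursion_geometric (mu : R) (s : nat -> R) :
  0 <= mu -> (forall n, 0 <= s n) ->
  (forall n, s (S n) <= mu * s n * (1 + s n)) -> mu * (1 + s O) < 1 ->
  forall n, s n <= (mu * (1 + s O)) ^ n * s O.
Proof.
  intros Hmu Hs Hrec Hr. set (r := mu * (1 + s O)) in *.
  assert (Hr0 : 0 <= r) by (unfold r; pose proof (Hs O); nra).
  induction n as [|n IH]; [simpl; lra|].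
  assert (Hpow : r ^ n <= 1) by (rewrite <- (pow1 n); apply pow_incr; lra).
  assert (Hsn : s n <= s O) by (pose proof (Hs O); nra).
  assert (Hstep : mu * s n * (1 + s n) <= r * s n).
  { assert (0 <= mu * s n * (s O - s n)).
    { apply Rmult_le_pos; [apply Rmult_le_pos|]; auto; lra. }
    unfold r. lra. }
  pose proof (Hrec n). pose proof (Hs n). simpl. nra.
Qed.

Lemma quadratic_recursion_small (mu : R) (s : nat -> R) :
  0 <= mu -> (forall n, 0 <= s n) ->
  (forall n, s (S n) <= mu * s n * (1 + s n)) -> mu * (1 + s O) < 1 ->
  forall delta, 0 < delta -> exists n, s n < delta /\ s (S n) < delta.
Proof.
  intros Hmu Hs Hrec Hr delta Hd.
  pose proof (quadratic_recursion_geometric mu s Hmu Hs Hrec Hr) as Hgeo.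
  set (r := mu * (1 + s O)) in *.
  assert (Hr0 : 0 <= r) by (unfold r; pose proof (Hs O); nra).
  destruct (Req_dec (s O) 0) as [H0|H0].
  { exists O. pose proof (Hgeo 1%nat). rewrite H0 in *. simpl in *. lra. }
  assert (Hpos : 0 < s O) by (pose proof (Hs O); lra).
  destruct (pow_lt_1_zero r) with (y := delta / s O) as [N HN].
  - rewrite Rabs_right; lra.
  - apply Rdiv_lt_0_compat; lra.
  - exists N. specialize (HN N (le_n N)).
    rewrite Rabs_right in HN by (apply Rle_ge, pow_le; lra).
    apply Rmult_lt_compat_r with (r := s O) in HN; [|lra].
    replace (delta / s O * s O) with delta in HN by (field; lra).
    pose proof (Hgeo N). pose proof (Hgeo (S N)). simpl in *.
    assert (0 <= r ^ N) by (apply pow_le; lra).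
    split; nra.
Qed.

Lemma M2_eq (A B : M2) :
  m11 A = m11 B -> m12 A = m12 B -> m21 A = m21 B -> m22 A = m22 B -> A = B.
Proof. destruct A, B; simpl; intros; subst; reflexivity. Qed.

Definition gM (lam : Cx) : M2 := mkM2 lam Czero Czero (Cinv lam).

Definition diagonal (A : M2) : Prop := m12 A = Czero /\ m21 A = Czero.
Definition antidiagonal (A : M2) : Prop := m11 A = Czero /\ m22 A = Czero.

Lemma gen_diagonal_or_antidiagonal lam h A :
  diagonal h \/ antidiagonal h -> gen (gM lam) h A -> diagonal A \/ antidiagonal A.
Proof.
  unfold diagonal, antidiagonal. intros Hh HA. induction HA.
  - left; split; reflexivity.
  - left; split; reflexivity.
  - exact Hh.
  - destruct IHHA as [[E1 E2]|[E1 E2]]; [left|right]; simpl; rewrite ?E1, ?E2; split; ring.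
  - destruct IHHA1 as [[E1 E2]|[E1 E2]]; destruct IHHA2 as [[F1 F2]|[F1 F2]];
      [left|right|right|left]; simpl; rewrite ?E1, ?E2, ?F1, ?F2; split; ring.
Qed.

(* Such a group permutes the two boundary points [oo] and [0]. *)
Lemma elementary_of_diagonal_or_antidiagonal lam h :
  diagonal h \/ antidiagonal h -> elementary (gen (gM lam) h).
Proof.
  intro Hh. exists PInf. split; [exact I|]. exists (PInf :: PFin Czero 0 :: nil).
  intros A HA.
  destruct (gen_diagonal_or_antidiagonal lam h A Hh HA) as [[E1 E2]|[E1 E2]]; unfold act.
  - rewrite E2. destruct (Req_dec_T (Cnorm2 Czero) 0) as [|Hn]; [left; auto|].
    exfalso. apply Hn. unfold Cnorm2; simpl; ring.
  - destruct (Req_dec_T (Cnorm2 (m21 A)) 0); [left; auto|].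
    right; left. rewrite E1. f_equal. ring.
Qed.

Definition conj_by (p k : M2) : M2 := mmul (minv p) (mmul k p).

Lemma gen_iter_conj_by g h p k j :
  gen g h p -> gen g h k -> gen g h (Nat.iter j (conj_by p) k).
Proof.
  intros Hp Hk. induction j as [|j IH]; simpl; auto.
  unfold conj_by. apply gen_mul; [apply gen_inv; auto|apply gen_mul; auto].
Qed.

Section DiagonalConjugation.
Variable p : M2.
Hypothesis Hp12 : m12 p = Czero.
Hypothesis Hp21 : m21 p = Czero.
Hypothesis Hpdet : Cmul (m11 p) (m22 p) = Cone.

Lemma conj_by_diagonal k :
  conj_by p k = mkM2 (m11 k) (Cmul (m12 k) (Cmul (m22 p) (m22 p)))
                     (Cmul (m21 k) (Cmul (m11 p) (m11 p))) (m22 k).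
Proof.
  destruct p as [u z1 z2 v]; simpl in *; subst z1 z2.
  apply M2_eq; simpl.
  - transitivity (Cmul (m11 k) (Cmul u v)); [ring|rewrite Hpdet; ring].
  - ring.
  - ring.
  - transitivity (Cmul (m22 k) (Cmul u v)); [ring|rewrite Hpdet; ring].
Qed.

Lemma iter_conj_by_diagonal k j :
  let U := Nat.iter j (conj_by p) k in
  m11 U = m11 k /\ m22 U = m22 k /\
  Cnorm (m12 U) = Cnorm (m12 k) * (Cnorm (m22 p) * Cnorm (m22 p)) ^ j /\
  Cnorm (m21 U) = Cnorm (m21 k) * (Cnorm (m11 p) * Cnorm (m11 p)) ^ j.
Proof.
  induction j as [|j [E11 [E22 [E12 E21]]]]; [simpl; repeat split; ring|].
  rewrite Nat.iter_succ, conj_by_diagonal; simpl.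
  rewrite !Cnorm_mul, E11, E22, E12, E21. repeat split; ring.
Qed.

End DiagonalConjugation.

Section Discreteness.
Variables (lam : Cx) (h : M2) (eps : R).
Hypothesis Hlam : 1 < Cnorm lam.
Hypothesis Heps : 0 < eps.
Hypothesis Hiso : forall y, gen (gM lam) h y -> mdist (gM lam) y < eps -> y = gM lam.

Lemma diagonal_of_conj_close p k j :
  gen (gM lam) h p -> m12 p = Czero -> m21 p = Czero -> Cmul (m11 p) (m22 p) = Cone ->
  gen (gM lam) h k ->
  Cnorm (Csub lam (m11 k)) + Cnorm (m12 k) * (Cnorm (m22 p) * Cnorm (m22 p)) ^ j
  + Cnorm (m21 k) * (Cnorm (m11 p) * Cnorm (m11 p)) ^ j
  + Cnorm (Csub (Cinv lam) (m22 k)) < eps ->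
  diagonal k.
Proof.
  intros Hp Hp12 Hp21 Hpdet Hk Hclose.
  destruct (iter_conj_by_diagonal p Hp12 Hp21 Hpdet k j) as [E11 [E22 [E12 E21]]].
  set (U := Nat.iter j (conj_by p) k) in *.
  assert (HU : U = gM lam).
  { apply Hiso; [apply gen_iter_conj_by; auto|].
    unfold mdist. simpl m11. simpl m12. simpl m21. simpl m22.
    rewrite E11, E22, !Cnorm_sub0l, E12, E21. lra. }
  assert (Hnp : Cnorm (m11 p) * Cnorm (m22 p) = 1) by (rewrite <- Cnorm_mul, Hpdet; apply Cnorm_one).
  pose proof (Cnorm_ge0 (m11 p)). pose proof (Cnorm_ge0 (m22 p)).
  assert (H11 : 0 < (Cnorm (m11 p) * Cnorm (m11 p)) ^ j) by (apply pow_lt; nra).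
  assert (H22 : 0 < (Cnorm (m22 p) * Cnorm (m22 p)) ^ j) by (apply pow_lt; nra).
  assert (Z12 : Cnorm (m12 U) = 0) by (rewrite HU; apply Cnorm_zero).
  assert (Z21 : Cnorm (m21 U) = 0) by (rewrite HU; apply Cnorm_zero).
  rewrite E12 in Z12. rewrite E21 in Z21.
  split; apply Cnorm_eq0; nra.
Qed.

Lemma near_diagonal_is_diagonal :
  exists delta, 0 < delta /\ forall k, gen (gM lam) h k ->
    Cnorm (Csub lam (m11 k)) < delta -> Cnorm (Csub (Cinv lam) (m22 k)) < delta ->
    Cnorm (m12 k) * Cnorm (m21 k) < delta -> diagonal k.
Proof.
  pose proof (Cnorm_gt1_neq0 lam Hlam) as Hl0.
  set (L := Cnorm lam * Cnorm lam).
  assert (HL : 1 < L) by (unfold L; nra).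
  assert (HLi : Cnorm (Cinv lam) * Cnorm (Cinv lam) = / L).
  { unfold L. rewrite Cnorm_inv by auto. field. lra. }
  set (t := eps / (8 * L)).
  assert (Ht : 0 < t) by (unfold t; apply Rdiv_lt_0_compat; lra).
  exists (Rmin (eps / 4) (t * t)). split; [apply Rmin_glb_lt; nra|].
  intros k Hk H11 H22 Hoff.
  pose proof (Rmin_l (eps / 4) (t * t)). pose proof (Rmin_r (eps / 4) (t * t)).
  set (B := Cnorm (m12 k)) in *. set (C := Cnorm (m21 k)) in *.
  assert (HB : 0 <= B) by apply Cnorm_ge0. assert (HC : 0 <= C) by apply Cnorm_ge0.
  assert (Hsq : 2 * L * sqrt (B * C) <= eps / 4).
  { assert (sqrt (B * C) <= t).
    { rewrite <- (sqrt_square t) by lra. apply sqrt_le_1_alt. lra. }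
    assert (L * t = eps / 8) by (unfold t; field; lra). nra. }
  assert (He8 : 0 < eps / 8) by lra.
  destruct (Rle_dec C B) as [HCB|HBC].
  - destruct (balance_powers L B C (eps / 8) HL (conj HC HCB) He8) as [j Hj].
    apply (diagonal_of_conj_close (gM lam) k j); simpl; auto using gen_g.
    + apply Cmul_inv; auto.
    + fold L. rewrite HLi. fold B C. lra.
  - destruct (balance_powers L C B (eps / 8) HL (conj HB (Rlt_le _ _ (Rnot_le_lt _ _ HBC))) He8)
      as [j Hj].
    apply (diagonal_of_conj_close (minv (gM lam)) k j); simpl;
      auto using gen_g, gen_inv.
    + ring.
    + ring.
    + replace (Cmul (Cinv lam) lam) with (Cmul lam (Cinv lam)) by ring. apply Cmul_inv; auto.
    + fold L. rewrite HLi. fold B C. rewrite (Rmult_comm C B) in Hj. lra.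
Qed.

End Discreteness.

Definition offdiag (k : M2) : Cx := Cmul (m12 k) (m21 k).

Section JorgensenStep.
Variable lam : Cx.
Hypothesis Hl : Cmul lam (Cinv lam) = Cone.
Let nu := Csub lam (Cinv lam).

Definition jstep (k : M2) : M2 := mmul (mmul k (gM lam)) (minv k).

Variable k : M2.
Hypothesis Hk : mdet k = Cone.

Lemma jstep_11 : m11 (jstep k) = Cadd lam (Cmul (offdiag k) nu).
Proof.
  destruct k as [a b c d]; unfold jstep, offdiag, mdet, nu in *; simpl in *.
  transitivity (Cadd (Cadd lam (Cmul (Cmul b c) (Csub lam (Cinv lam))))
                     (Cmul lam (Csub (Csub (Cmul a d) (Cmul b c)) Cone))); [ring|].
  rewrite Hk. ring.
Qed.

Lemma jstep_22 : m22 (jstep k) = Csub (Cinv lam) (Cmul (offdiag k) nu).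
Proof.
  destruct k as [a b c d]; unfold jstep, offdiag, mdet, nu in *; simpl in *.
  transitivity (Cadd (Csub (Cinv lam) (Cmul (Cmul b c) (Csub lam (Cinv lam))))
                     (Cmul (Cinv lam) (Csub (Csub (Cmul a d) (Cmul b c)) Cone))); [ring|].
  rewrite Hk. ring.
Qed.

Lemma jstep_12 : m12 (jstep k) = Cneg (Cmul (Cmul (m11 k) (m12 k)) nu).
Proof. destruct k as [a b c d]; unfold jstep, nu; simpl. ring. Qed.

Lemma jstep_21 : m21 (jstep k) = Cmul (Cmul (m21 k) (m22 k)) nu.
Proof. destruct k as [a b c d]; unfold jstep, nu; simpl. ring. Qed.

Lemma jstep_det : mdet (jstep k) = Cone.
Proof.
  destruct k as [a b c d]; unfold jstep, mdet in *; simpl in *.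
  transitivity (Cmul (Cmul (Csub (Cmul a d) (Cmul b c)) (Csub (Cmul a d) (Cmul b c)))
                     (Cmul lam (Cinv lam))); [ring|].
  rewrite Hk, Hl. ring.
Qed.

Lemma jstep_trace : Cadd (m11 (jstep k)) (m22 (jstep k)) = Cadd lam (Cinv lam).
Proof. rewrite jstep_11, jstep_22. ring. Qed.

Lemma jstep_offdiag :
  offdiag (jstep k) =
  Cneg (Cmul (Cmul (offdiag k) (Cadd Cone (offdiag k))) (Cmul nu nu)).
Proof.
  unfold offdiag. rewrite jstep_12, jstep_21.
  destruct k as [a b c d]; unfold mdet in Hk; simpl in *.
  transitivity (Cneg (Cmul (Cmul (Cmul b c) (Cadd (Csub (Cmul a d) (Cmul b c)) (Cmul b c)))
                           (Cmul nu nu))); [ring|].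
  rewrite Hk. ring.
Qed.

Lemma diagonal_or_antidiagonal_of_jstep :
  nu <> Czero -> diagonal (jstep k) -> diagonal k \/ antidiagonal k.
Proof.
  intros Hnu [H12 H21]. rewrite jstep_12 in H12. rewrite jstep_21 in H21.
  assert (H12' : Cmul (Cmul (m11 k) (m12 k)) nu = Czero).
  { transitivity (Cneg (Cneg (Cmul (Cmul (m11 k) (m12 k)) nu))); [ring|].
    rewrite H12. ring. }
  destruct (Cmul_eq0 _ _ H12') as [E1|]; [|contradiction].
  destruct (Cmul_eq0 _ _ H21) as [E2|]; [|contradiction].
  unfold diagonal, antidiagonal.
  destruct k as [a b c d]; unfold mdet in Hk; simpl in *.
  destruct (Cmul_eq0 _ _ E1) as [Ha|Hb]; destruct (Cmul_eq0 _ _ E2) as [Hc|Hd]; subst;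
    auto; exfalso; apply Cone_neq0; rewrite <- Hk; ring.
Qed.

End JorgensenStep.

Definition jseq (lam : Cx) (h : M2) (n : nat) : M2 := Nat.iter n (jstep lam) h.

Section JorgensenSequence.
Variables (lam : Cx) (h : M2).
Hypothesis Hl : Cmul lam (Cinv lam) = Cone.
Hypothesis Hh : mdet h = Cone.
Let nu := Csub lam (Cinv lam).
Let rho n := Cnorm (offdiag (jseq lam h n)).

Lemma gen_jseq n : gen (gM lam) h (jseq lam h n).
Proof.
  induction n as [|n IH]; [apply gen_h|].
  unfold jseq. rewrite Nat.iter_succ. fold (jseq lam h n).
  unfold jstep. repeat apply gen_mul; auto using gen_g, gen_inv.
Qed.

Lemma jseq_det n : mdet (jseq lam h n) = Cone.
Proof.
  induction n as [|n IH]; auto.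
  unfold jseq. rewrite Nat.iter_succ. apply jstep_det; auto.
Qed.

Lemma jseq_S n : jseq lam h (S n) = jstep lam (jseq lam h n).
Proof. apply Nat.iter_succ. Qed.

Lemma rho_step n : rho (S n) <= Cnorm nu * Cnorm nu * rho n * (1 + rho n).
Proof.
  unfold rho. rewrite jseq_S, jstep_offdiag by (auto; apply jseq_det). fold nu.
  set (p := offdiag (jseq lam h n)).
  rewrite Cnorm_neg, !Cnorm_mul.
  pose proof (Cnorm_add1_le p). pose proof (Cnorm_ge0 p). pose proof (Cnorm_ge0 nu).
  assert (0 <= Cnorm p * (Cnorm nu * Cnorm nu)) by (apply Rmult_le_pos; nra).
  nra.
Qed.

Lemma jseq_11_close n : Cnorm (Csub lam (m11 (jseq lam h (S n)))) = rho n * Cnorm nu.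
Proof.
  unfold rho. rewrite jseq_S, jstep_11 by apply jseq_det. fold nu.
  replace (Csub lam (Cadd lam (Cmul (offdiag (jseq lam h n)) nu)))
    with (Cneg (Cmul (offdiag (jseq lam h n)) nu)) by ring.
  rewrite Cnorm_neg, Cnorm_mul. reflexivity.
Qed.

Lemma jseq_22_close n : Cnorm (Csub (Cinv lam) (m22 (jseq lam h (S n)))) = rho n * Cnorm nu.
Proof.
  unfold rho. rewrite jseq_S, jstep_22 by apply jseq_det. fold nu.
  replace (Csub (Cinv lam) (Csub (Cinv lam) (Cmul (offdiag (jseq lam h n)) nu)))
    with (Cmul (offdiag (jseq lam h n)) nu) by ring.
  apply Cnorm_mul.
Qed.

(* Every [jseq (S n)] has trace [lam + 1/lam <> 0], so it cannot be antidiagonal. *)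
Lemma diagonal_or_antidiagonal_of_jseq :
  nu <> Czero -> Cadd lam (Cinv lam) <> Czero ->
  forall n, diagonal (jseq lam h (S n)) -> diagonal h \/ antidiagonal h.
Proof.
  intros Hnu Htr n. induction n as [|n IH]; intro Hd.
  - apply (diagonal_or_antidiagonal_of_jstep lam); auto.
  - apply IH. rewrite jseq_S in Hd.
    destruct (diagonal_or_antidiagonal_of_jstep lam (jseq lam h (S n))) as [|[E1 E2]];
      auto using jseq_det.
    exfalso. apply Htr.
    assert (Etr : Cadd (m11 (jseq lam h (S n))) (m22 (jseq lam h (S n))) = Cadd lam (Cinv lam)).
    { rewrite jseq_S. apply jstep_trace, jseq_det. }
    rewrite <- Etr, E1, E2. ring.
Qed.

End JorgensenSequence.

Lemma Cmul_self_neq lam u : 1 < Cnorm lam -> Cnorm u = 1 -> Cmul lam lam <> u.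
Proof.
  intros Hlam Hu E.
  assert (Cnorm lam * Cnorm lam = 1) by (rewrite <- Cnorm_mul, E; exact Hu).
  nra.
Qed.

Lemma sub_inv_neq0 lam : 1 < Cnorm lam -> Csub lam (Cinv lam) <> Czero.
Proof.
  intros Hlam E. apply (Cmul_self_neq lam Cone Hlam Cnorm_one).
  rewrite <- (Cmul_inv lam) by (apply Cnorm_gt1_neq0; auto).
  replace lam with (Cadd (Csub lam (Cinv lam)) (Cinv lam)) at 2 by ring.
  rewrite E. ring.
Qed.

Lemma add_inv_neq0 lam : 1 < Cnorm lam -> Cadd lam (Cinv lam) <> Czero.
Proof.
  intros Hlam E. apply (Cmul_self_neq lam (Cneg Cone) Hlam).
  - rewrite Cnorm_neg. apply Cnorm_one.
  - rewrite <- (Cmul_inv lam) by (apply Cnorm_gt1_neq0; auto).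
    replace lam with (Csub (Cadd lam (Cinv lam)) (Cinv lam)) at 2 by ring.
    rewrite E. ring.
Qed.

Theorem jorgensen_type_inequality lam h :
  1 < Cnorm lam -> mdet h = Cone ->
  discrete (gen (gM lam) h) -> ~ elementary (gen (gM lam) h) ->
  let mu := Cnorm (Csub lam (Cinv lam)) * Cnorm (Csub lam (Cinv lam)) in
  1 <= mu * (1 + mu * (Cnorm (offdiag h) * Cnorm (Cadd Cone (offdiag h)))).
Proof.
  intros Hlam Hh Hdisc Hnel mu. apply Rnot_lt_le. intro Hsmall. apply Hnel.
  assert (Hl : Cmul lam (Cinv lam) = Cone) by (apply Cmul_inv, Cnorm_gt1_neq0; auto).
  set (nu := Csub lam (Cinv lam)) in *.
  set (s n := Cnorm (offdiag (jseq lam h (S n)))).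
  assert (Hs0 : s O = mu * (Cnorm (offdiag h) * Cnorm (Cadd Cone (offdiag h)))).
  { unfold s. rewrite jseq_S, jstep_offdiag by auto.
    rewrite Cnorm_neg, !Cnorm_mul. unfold mu, nu. simpl. ring. }
  assert (Hmu0 : 0 <= mu) by (unfold mu; pose proof (Cnorm_ge0 nu); nra).
  assert (Hs : forall n, 0 <= s n) by (intro; apply Cnorm_ge0).
  assert (Hmu1 : Cnorm nu <= 1).
  { pose proof (Hs O). pose proof (Cnorm_ge0 nu). unfold mu in *. nra. }
  destruct (Hdisc (gM lam) (gen_g _ _)) as [eps [Heps Hiso]].
  destruct (near_diagonal_is_diagonal lam h eps Hlam Heps Hiso) as [delta [Hdelta Hdiag]].
  destruct (quadratic_recursion_small mu s Hmu0 Hs) with (delta := delta)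
    as [n [Hn HSn]]; auto.
  - intro n. apply rho_step; auto.
  - rewrite Hs0. exact Hsmall.
  - apply elementary_of_diagonal_or_antidiagonal.
    apply (diagonal_or_antidiagonal_of_jseq lam h Hl Hh (sub_inv_neq0 lam Hlam)
             (add_inv_neq0 lam Hlam) (S n)).
    pose proof (Hs n).
    apply Hdiag; [apply gen_jseq| | |].
    + rewrite jseq_11_close by auto. fold nu. fold (s n). nra.
    + rewrite jseq_22_close by auto. fold nu. fold (s n). nra.
    + rewrite <- Cnorm_mul. exact HSn.
Qed.

Section Bounds.
Variable M : R.
Hypothesis HM : 0 < M < 1.
Let t := (1 - M) / M.

Lemma Msq_mul_one_plus_tsq : M * M * (1 + t * t) = M * M + (1 - M) * (1 - M).
Proof. unfold t. field. lra. Qed.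

Lemma lt1_of_prod_bound mu p : 0 <= mu <= M * M -> 0 <= p ->
  M * M * p <= t * t -> mu * (1 + mu * p) < 1.
Proof.
  intros Hmu Hp Hb. pose proof Msq_mul_one_plus_tsq.
  assert (mu * p <= t * t) by nra.
  assert (mu * (1 + mu * p) <= M * M * (1 + t * t)) by nra.
  nra.
Qed.

Lemma prod_bound_of_sqrt_le x y : 0 <= x -> 0 <= y -> y <= 1 + x ->
  sqrt x <= t -> M * M * (x * y) <= t * t.
Proof.
  intros Hx Hy Hyx Hs. pose proof Msq_mul_one_plus_tsq.
  assert (Hxt : x <= t * t).
  { rewrite <- (sqrt_sqrt x) by auto. apply Rmult_le_compat; auto using sqrt_pos. }
  assert (x * y <= t * t * (1 + t * t)) by (apply Rmult_le_compat; lra).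
  assert (0 <= t * t) by nra.
  assert (M * M * (x * y) <= t * t * (M * M * (1 + t * t))).
  { replace (t * t * (M * M * (1 + t * t))) with (M * M * (t * t * (1 + t * t))) by ring.
    apply Rmult_le_compat_l; nra. }
  assert (M * M + (1 - M) * (1 - M) <= 1) by nra.
  nra.
Qed.

Lemma prod_bound_of_sum_le x y : 0 <= x -> 0 <= y ->
  x + y <= 2 * (1 - M) / (M * M) -> M * M * (x * y) <= t * t.
Proof.
  intros Hx Hy Hs.
  assert (HS : 2 * (1 - M) / (M * M) = 2 * (t / M)) by (unfold t; field; lra).
  rewrite HS in Hs.
  assert (Ht : 0 <= t / M) by (unfold t; apply Rmult_le_pos; [apply Rmult_le_pos|]; 
    try apply Rlt_le, Rinv_0_lt_compat; lra).
  assert ((x + y) * (x + y) <= 2 * (t / M) * (2 * (t / M))) by (apply Rmult_le_compat; lra).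
  assert (0 <= (x - y) * (x - y)) by apply Rle_0_sqr.
  assert (4 * (x * y) <= 4 * (t / M) * (t / M)) by lra.
  assert (Htm : M * M * ((t / M) * (t / M)) = t * t) by (field; lra).
  nra.
Qed.

End Bounds.

Theorem mainTheorem3 (lam a b c d : Cx) :
  1 < Cnorm lam ->
  mdet (mkM2 a b c d) = Cone ->
  let g := mkM2 lam Czero Czero (Cinv lam) in
  let h := mkM2 a b c d in
  let Mg := Cnorm (Csub lam Cone) + Cnorm (Csub (Cinv lam) Cone) in
  Mg < 1 ->
  discrete (gen g h) ->
  ~ elementary (gen g h) ->
  sqrt (Cnorm (Cmul b c)) > (1 - Mg) / Mg /\
  sqrt (Cnorm (Cadd Cone (Cmul b c))) > (1 - Mg) / Mg /\
  Cnorm (Cadd Cone (Cmul b c)) + Cnorm (Cmul b c) > 2 * (1 - Mg) / (Mg * Mg).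
Proof.
  intros Hlam Hh g h M HM Hdisc Hnel.
  pose proof (jorgensen_type_inequality lam h Hlam Hh Hdisc Hnel) as J. cbv zeta in J.
  change (offdiag h) with (Cmul b c) in J.
  set (nu := Csub lam (Cinv lam)) in J.
  assert (Hnu : Cnorm nu <= M).
  { unfold nu, M.
    replace (Csub lam (Cinv lam)) with (Csub (Csub lam Cone) (Csub (Cinv lam) Cone)) by ring.
    apply Cnorm_sub. }
  pose proof (Cnorm_pos nu (sub_inv_neq0 lam Hlam)).
  assert (HM0 : 0 < M < 1) by lra.
  assert (Hmu : 0 <= Cnorm nu * Cnorm nu <= M * M) by (split; nra).
  set (x := Cnorm (Cmul b c)) in *. set (y := Cnorm (Cadd Cone (Cmul b c))) in *.
  assert (Hx : 0 <= x) by apply Cnorm_ge0. assert (Hy : 0 <= y) by apply Cnorm_ge0.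
  assert (Hyx : y <= 1 + x) by apply Cnorm_add1_le.
  assert (Hxy : x <= 1 + y).
  { unfold x, y. replace (Cmul b c) with (Csub (Cadd Cone (Cmul b c)) Cone) at 1 by ring.
    pose proof (Cnorm_sub (Cadd Cone (Cmul b c)) Cone) as Hsub. rewrite Cnorm_one in Hsub. lra. }
  assert (Hxy0 : 0 <= x * y) by nra.
  assert (Hcontra : ~ M * M * (x * y) <= ((1 - M) / M) * ((1 - M) / M)).
  { intro Hb. exact (Rlt_not_le _ _ (lt1_of_prod_bound M HM0 _ _ Hmu Hxy0 Hb) J). }
  split; [|split]; apply Rnot_le_lt; intro Hle; apply Hcontra.
  - apply prod_bound_of_sqrt_le; auto.
  - rewrite (Rmult_comm x y). apply prod_bound_of_sqrt_le; auto.
  - apply prod_bound_of_sum_le; auto. lra.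
Qed.
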